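(* Let $X$ be a real Banach space, let $K\subset X$ be compact, let $\lambda_1,\dots,\lambda_m\in X^*$ with $\|\lambda_j\|_{X^*}=1$, and let $w\in\mathbb{R}^m$. Then $$\lim_{\varepsilon\to 0^+} R(K(w,\varepsilon))_X=R(K_w)_X .$$
   Context: For $g\in X$ write $\lambda(g):=(\lambda_1(g),\dots,\lambda_m(g))\in\mathbb{R}^m$. On $\mathbb{R}^m$ use the norm $\|v\|:=\big[\frac1m\sum_{j=1}^m|v_j|^2\big]^{1/2}$. For $w\in\mathbb{R}^m$, $K_w:=\{f\in K:\ \lambda(f)=w\}$, and for $\varepsilon>0$, $K(w,\varepsilon):=\bigcup_{w'\in\mathbb{R}^m:\ \|w'-w\|\le\varepsilon}K_{w'}$. For a set $S\subset X$, the Chebyshev radius is $R(S)_X:=\inf\{r:\ S\subset B(z,r)_X \text{ for some } z\in X\}$, where $B(z,r)_X$ is the closed ball in $X$ of center $z$ and radius $r$. *)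

From HB Require Import structures.
From mathcomp Require Import all_boot all_order all_algebra.
From mathcomp Require Import all_classical all_reals all_analysis.
Set Implicit Arguments. Unset Strict Implicit. Unset Printing Implicit Defensive.
Import Order.TTheory GRing.Theory Num.Theory.
Import numFieldNormedType.Exports.
Local Open Scope classical_set_scope.
Local Open Scope ring_scope.

Definition dual_norm {R : realType} {X : normedModType R} (f : X -> R) : R :=
  sup [set `|f x| | x in [set x : X | `|x| <= 1]].

Definition cball {R : realType} {X : normedModType R} (z : X) (r : R) : set X :=
  [set y | `|z - y| <= r].

(* Chebyshev radius, in the extended reals (= -oo for the empty set) *)
Definition cheb_radius {R : realType} {X : normedModType R} (S : set X) : \bar R :=
  ereal_inf [set r%:E | r in [set r : R | exists z : X, S `<=` cball z r]].

Definition mnorm {R : realType} {m : nat} (v : 'I_m -> R) : R :=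
  Num.sqrt ((m%:R)^-1 * \sum_(j < m) `|v j| ^+ 2).

Definition lam {R : realType} {X : normedModType R} {m : nat}
  (l : 'I_m -> X -> R) (g : X) : 'I_m -> R := fun j => l j g.

Definition Kfib {R : realType} {X : normedModType R} {m : nat}
  (l : 'I_m -> X -> R) (K : set X) (w : 'I_m -> R) : set X :=
  [set f | K f /\ lam l f = w].

Definition Kthick {R : realType} {X : normedModType R} {m : nat}
  (l : 'I_m -> X -> R) (K : set X) (w : 'I_m -> R) (eps : R) : set X :=
  \bigcup_(w' in [set w' : 'I_m -> R | mnorm (fun j => w' j - w j) <= eps])
    Kfib l K w'.

From HB Require Import structures.
From mathcomp Require Import all_boot all_order all_algebra.
From mathcomp Require Import all_classical all_reals all_analysis.
From mathcomp Require Import lra.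
Set Implicit Arguments. Unset Strict Implicit. Unset Printing Implicit Defensive.
Import Order.TTheory GRing.Theory Num.Theory.
Import numFieldNormedType.Exports.
Local Open Scope classical_set_scope.
Local Open Scope ring_scope.

(* Monotonicity in eps gives R(K_w) <= R(K(w,eps)).  Conversely, if K_w lies in
   a ball B(z, r0) and r0 < r, the compact set of points of K outside the open
   ball of radius r around z misses K_w, so the continuous residual
   sum_j (lambda_j f - w_j)^2 is bounded below there by some d > 0; once
   m eps^2 < d, the whole of K(w,eps) lies in B(z, r). *)

Lemma cvge_eventually_between (R : realFieldType) (T : Type) (F : set_system T)
    {FF : Filter F} (f : T -> \bar R) (L : \bar R) :
  (\forall t \near F, L <= f t)%E ->
  (forall x : R, (L < x%:E)%E -> \forall t \near F, (f t <= x%:E)%E) ->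
  f t @[t --> F] --> L.
Proof.
case: L => [r| |] lb ub.
- apply/fine_cvgP; split.
    near=> t.
    have lo : (r%:E <= f t)%E by near: t; exact: lb.
    have hi : (f t <= (r + 1)%:E)%E by near: t; apply: ub; rewrite lte_fin ltrDl.
    by move: lo hi; case: (f t).
  apply/cvgrPdist_le => eps eps0; near=> t.
  have lo : (r%:E <= f t)%E by near: t; exact: lb.
  have hi : (f t <= (r + eps)%:E)%E by near: t; apply: ub; rewrite lte_fin ltrDl.
  case ft : (f t) lo hi => [s||] //=; rewrite !lee_fin => lo hi.
  rewrite /comp /= ft /= ler_norml; apply/andP; split; lra.
- exact: (gee_cvgy lb (cvg_cst +oo%E)).
- by apply/cvgeNyPle => A; apply: ub; exact: ltNyr.
Unshelve. all: by end_near. Qed.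

Lemma compact_continuous_pos_lbound (R : realType) (T : topologicalType)
    (C : set T) (h : T -> R) :
  compact C -> continuous h -> (forall x, C x -> 0 < h x) ->
  exists2 d, 0 < d & forall x, C x -> d <= h x.
Proof.
move=> cC hc hC_gt0.
have closed_hC : closed (h @` C).
  exact/(compact_closed (@Rhausdorff _))/(continuous_compact (continuous_subspaceT hc)).
have hC0 : ~ (h @` C) 0 by case=> x Cx hx0; move: (hC_gt0 x Cx); rewrite hx0 ltxx.
have := closed_openC closed_hC; rewrite openE => /(_ 0 hC0) /nbhs_ballP [d d0 bd].
exists d => // x Cx; rewrite leNgt; apply/negP => hxd.
apply: (bd (h x)); last by exists x.
by rewrite -ball_normE /= sub0r normrN gtr0_norm // hC_gt0.
Qed.

Lemma mnorm_ge0 (R : realType) (m : nat) (v : 'I_m -> R) : 0 <= mnorm v.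
Proof. exact: sqrtr_ge0. Qed.

Lemma mnorm0 (R : realType) (m : nat) : mnorm (fun _ : 'I_m => 0 : R) = 0.
Proof. by rewrite /mnorm big1 ?mulr0 ?sqrtr0 // => j _; rewrite normr0 expr0n. Qed.

Lemma sum_sqr_le_mnorm (R : realType) (m : nat) (v : 'I_m -> R) (e : R) :
  mnorm v <= e -> \sum_(j < m) v j ^+ 2 <= m%:R * e ^+ 2.
Proof.
case: m v => [|m] v le_ve; first by rewrite big_ord0 mul0r.
have e0 : 0 <= e := le_trans (mnorm_ge0 v) le_ve.
move: le_ve; rewrite /mnorm -{1}(ger0_norm e0) -sqrtr_sqr ler_sqrt ?sqr_ge0 //.
rewrite ler_pdivrMl ?ltr0n //.
by rewrite (eq_bigr (fun j => v j ^+ 2)) // => j _; rewrite real_normK ?num_real.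
Qed.

Lemma cheb_radius_subset (R : realType) (X : normedModType R) (A B : set X) :
  A `<=` B -> (cheb_radius A <= cheb_radius B)%E.
Proof.
move=> AB; apply: le_ereal_inf; apply: image_subset => r [z Bz].
by exists z; exact: subset_trans Bz.
Qed.

Lemma cheb_radius_le (R : realType) (X : normedModType R) (S : set X) z r :
  S `<=` cball z r -> (cheb_radius S <= r%:E)%E.
Proof. by move=> Sz; apply: ereal_inf_lbound; exists r => //; exists z. Qed.

Lemma cheb_radius_lt (R : realType) (X : normedModType R) (S : set X) (x : R) :
  (cheb_radius S < x%:E)%E -> exists z r, S `<=` cball z r /\ r < x.
Proof.
by move=> /ereal_inf_lt [_ [r [z Sz] <-]]; rewrite lte_fin => rx; exists z, r.
Qed.

Section Fibers.
Variables (R : realType) (X : normedModType R) (m : nat).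
Variables (l : 'I_m -> X -> R) (K : set X) (w : 'I_m -> R).

Definition fib_residual (f : X) : R := \sum_(j < m) (l j f - w j) ^+ 2.

Lemma fib_residual_ge0 f : 0 <= fib_residual f.
Proof. by apply: sumr_ge0 => j _; rewrite sqr_ge0. Qed.

Lemma fib_residual_eq0 f : fib_residual f = 0 -> lam l f = w.
Proof.
move=> res0; apply/funext => j; apply/eqP; rewrite -subr_eq0 -sqrf_eq0.
by apply/eqP/(psumr_eq0P _ res0) => // i _; rewrite sqr_ge0.
Qed.

Lemma fib_residual_le f e :
  mnorm (fun j => lam l f j - w j) <= e -> fib_residual f <= m%:R * e ^+ 2.
Proof. exact: sum_sqr_le_mnorm. Qed.

Lemma continuous_fib_residual :
  (forall j, continuous (l j)) -> continuous fib_residual.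
Proof.
move=> lc f; apply: (cvg_big (P := xpredT) add_continuous) => j _.
by apply: cvgM; (apply: cvgB; [exact: lc | exact: cvg_cst]).
Qed.

Lemma Kfib_sub_Kthick e : 0 <= e -> Kfib l K w `<=` Kthick l K w e.
Proof.
by move=> e0 f Kf; exists w => //=; under eq_fun do rewrite subrr; rewrite mnorm0.
Qed.

Lemma Kthick_sub_cball_near z r0 r :
  compact K -> (forall j, continuous (l j)) ->
  Kfib l K w `<=` cball z r0 -> r0 < r ->
  \forall e \near 0^'+, Kthick l K w e `<=` cball z r.
Proof.
move=> cK lc Kfib_sub r0r.
pose C := K `&` [set f | r <= `|z - f|].
have cC : compact C.
  apply: compact_closedI cK _.
  have : continuous (fun f : X => `|z - f|).
    by move=> f; apply: cvg_norm; apply: cvgB; [exact: cvg_cst | exact: cvg_id].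
  by move/continuous_closedP => /(_ _ (@closed_ge _ r)).
have res_gt0 : forall f, C f -> 0 < fib_residual f.
  move=> f [Kf rf]; rewrite lt_def fib_residual_ge0 andbT; apply/eqP.
  move=> /fib_residual_eq0 lamf; have := Kfib_sub f (conj Kf lamf).
  by rewrite /cball /= => zf; move: rf; rewrite /= leNgt (le_lt_trans zf r0r).
have [d d0 res_ge] :=
  compact_continuous_pos_lbound cC (continuous_fib_residual lc) res_gt0.
have md0 : 0 < d / (m%:R + 1) by rewrite divr_gt0 // ltr_wpDl.
near=> e => f [w' /= w'e [Kf lamf]]; rewrite /cball /= leNgt; apply/negP => rf.
have e0 : 0 < e by near: e; exact: nbhs_right_gt.
have e1 : e < 1 by near: e; exact: nbhs_right_lt.
have ed : e < d / (m%:R + 1) by near: e; exact: nbhs_right_lt.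
rewrite ltr_pdivlMr ?ltr_wpDl // in ed.
have := res_ge f (conj Kf (ltW rf)).
have : fib_residual f <= m%:R * e ^+ 2 by apply: fib_residual_le; rewrite lamf.
have m0 : 0 <= m%:R :> R := ler0n _ m.
rewrite expr2; nra.
Unshelve. all: by end_near. Qed.

End Fibers.

Theorem lemma2p1 (R : realType) (X : completeNormedModType R) (m : nat)
  (K : set X) (l : 'I_m -> {linear X -> R^o}) (w : 'I_m -> R) :
  compact K ->
  (forall j, continuous (l j : X -> R)) ->
  (forall j, dual_norm (l j : X -> R) = 1) ->
  cheb_radius (Kthick (fun j => (l j : X -> R)) K w e) @[e --> 0^'+] -->
  cheb_radius (Kfib (fun j => (l j : X -> R)) K w).
Proof.
move=> cK lc _; apply: cvge_eventually_between.
  near=> e; apply/cheb_radius_subset/Kfib_sub_Kthick.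
  by near: e; exact: nbhs_right_ge.
move=> x /cheb_radius_lt [z [r0 [Kfib_sub r0x]]].
apply: filterS (Kthick_sub_cball_near cK lc Kfib_sub r0x) => e.
exact: cheb_radius_le.
Unshelve. all: by end_near. Qed.
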